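(* Let $F$ be a field of characteristic zero and $A$ a unital associative $F$-algebra with $A=F1\oplus N$ as vector spaces, where $N$ is a nilpotent ideal of index $m$ (i.e., $m$ is least with $N^m=0$). Let $R$ be a Rota–Baxter operator of weight zero on $A$. Then (a) $\mathrm{Im}\,R\subseteq N$; (b) $\mathrm{rb}(A)\le 2m-1$.
   Context: A linear operator $R$ on $A$ is a Rota–Baxter operator of weight $0$ if $R(x)R(y)=R(R(x)y+xR(y))$ for all $x,y\in A$. The RB-index $\mathrm{rb}(A)$ is the least $n\in\mathbb N$ such that $R^n=0$ for every Rota–Baxter operator $R$ of weight zero on $A$ ($\infty$ if no such $n$ exists). *)

From HB Require Import structures.
From mathcomp Require Import all_boot all_order all_algebra.
Set Implicit Arguments. Unset Strict Implicit. Unset Printing Implicit Defensive.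
Import GRing.Theory.
Local Open Scope ring_scope.

Definition is_RB0 (F : fieldType) (A : algType F) (R : A -> A) : Prop :=
  linear R /\ forall x y : A, R x * R y = R (R x * y + x * R y).

Definition is_ideal (F : fieldType) (A : algType F) (N : pred A) : Prop :=
  [/\ 0 \in N,
      (forall x y, x \in N -> y \in N -> x + y \in N),
      (forall (c : F) x, x \in N -> c *: x \in N),
      (forall a x, x \in N -> a * x \in N) &
      (forall a x, x \in N -> x * a \in N)].

(* N^k = 0 : every product of k elements of N vanishes
   (N^k is spanned by such products). *)
Definition pow_ideal_zero (F : fieldType) (A : algType F) (N : pred A) (k : nat)
  : Prop :=
  forall xs : seq A, size xs = k -> all (fun x => x \in N) xs ->
    \prod_(x <- xs) x = 0.

Definition nil_index (F : fieldType) (A : algType F) (N : pred A) (m : nat)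
  : Prop :=
  pow_ideal_zero N m /\ forall k, (k < m)%N -> ~ pow_ideal_zero N k.

Definition unit_plus_N_decomp (F : fieldType) (A : algType F) (N : pred A)
  : Prop :=
  (forall a : A, exists c : F, exists n : A, n \in N /\ a = c%:A + n) /\
  (forall c : F, c%:A \in N -> c = 0).

Definition rb_le (F : fieldType) (A : algType F) (k : nat) : Prop :=
  forall R : A -> A, is_RB0 R -> forall x : A, iter k R x = 0.

From HB Require Import structures.
From mathcomp Require Import all_boot all_order all_algebra.
From mathcomp Require Import zify.
Set Implicit Arguments. Unset Strict Implicit. Unset Printing Implicit Defensive.
Import GRing.Theory.
Local Open Scope ring_scope.

(* (a) The image of a weight-zero Rota-Baxter operator R is a (non-unital)
   subalgebra.  If R x = c + n with c <> 0 and n nilpotent, expanding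
   (R x - c)^m = 0 puts the unit in the image, and R z = 1 forces
   1 = R z * R z = R (2 z) = 2, i.e. A = 0.
   (b) Put a = R 1.  The Rota-Baxter identity gives
   [L_a, R^(k+1)] = (k+1) R^(k+2), so (ad L_a)^k R = k! R^(k+1).  Expanding
   (ad L_a)^k R as a sum of terms a^i R (a^j _) with i + j = k, every term
   dies once k >= 2m - 2, because a^m = 0 and a^(m-1) N = 0. *)

Section RotaBaxterWeightZero.
Variables (F : fieldType) (A : algType F) (R : A -> A).
Hypothesis linR : linear R.
Hypothesis RBR : forall x y : A, R x * R y = R (R x * y + x * R y).

HB.instance Definition _ := GRing.isLinear.Build F A A *:%R R linR.
Let R0 : R 0 = 0 := raddf0 R.
Let RD : {morph R : x y / x + y} := raddfD R.
Let RB : {morph R : x y / x - y} := raddfB R.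
Let RMn n : {morph R : x / x *+ n} := raddfMn R n.
Let RZ c : {morph R : x / c *: x} := linearZ_LR R c.

Lemma RB0_unit_image_trivial z : R z = 1 -> (1 : A) = 0.
Proof.
move=> Rz1; have := RBR z z; rewrite Rz1 !mulr1 !mul1r RD Rz1.
by move=> /(congr1 (fun u => u - 1)); rewrite addrK subrr => /esym.
Qed.

Lemma RB0_expr_subC c x k :
  exists z, (R x - c%:A) ^+ k = ((- c) ^+ k)%:A + R z.
Proof.
elim: k => [|k [z IH]]; first by exists 0; rewrite R0 !expr0 scale1r addr0.
exists ((- c) ^+ k *: x + (R x * z + x * R z) - c *: z).
rewrite RB RD !RZ -RBR exprS IH mulrBl !mulrDr.
rewrite mulr_algr !mulr_algl exprS mulNr scaleNr scalerA.
by rewrite opprD addrA addrAC addrC.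
Qed.

Lemma RB0_nilpotent_subC_trivial c x m :
  c != 0 -> (R x - c%:A) ^+ m = 0 -> (1 : A) = 0.
Proof.
move=> c0 nil_m; have [z Ez] := RB0_expr_subC c x m.
have cm0 : (- c) ^+ m != 0 by rewrite expf_neq0 // oppr_eq0.
apply: (@RB0_unit_image_trivial (- ((- c) ^+ m)^-1 *: z)).
have Rz : R z = - ((- c) ^+ m)%:A by apply/eqP; rewrite -addr_eq0 addrC -Ez nil_m.
by rewrite RZ Rz scaleNr scalerN opprK scalerA mulVf // scale1r.
Qed.

Lemma RB0_R1_commutator x : R 1 * R x - R (R 1 * x) = R (R x).
Proof. by rewrite RBR mul1r RD addrAC subrr add0r. Qed.

Lemma RB0_R1_commutator_iter n x :
  R 1 * iter n.+1 R x - iter n.+1 R (R 1 * x) = iter n.+2 R x *+ n.+1.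
Proof.
elim: n x => [|n IH] x; first by rewrite RB0_R1_commutator.
rewrite [iter n.+2 R x]iterS [iter n.+2 R (R 1 * x)]iterS.
rewrite -[R 1 * R _](subrK (R (R 1 * iter n.+1 R x))) RB0_R1_commutator.
by rewrite -addrA -RB IH RMn -!iterS -mulrS.
Qed.

Fixpoint ad_R1_pow (k : nat) (x : A) : A :=
  if k is k'.+1 then R 1 * ad_R1_pow k' x - ad_R1_pow k' (R 1 * x) else R x.

Lemma ad_R1_powE k x : ad_R1_pow k x = iter k.+1 R x *+ k`!.
Proof.
elim: k x => [|k IH] x /=; first by rewrite mulr1n.
by rewrite !IH mulrnAr -mulrnBl RB0_R1_commutator_iter factS mulrnA.
Qed.

Section NilpotentR1.
Variables s t : nat.
Hypothesis R1s_image : forall z, R 1 ^+ s * R z = 0.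
Hypothesis R1t : R 1 ^+ t = 0.

Lemma ad_R1_pow_vanish k i j y : (s + t <= (i + j + k).+1)%N ->
  R 1 ^+ i * ad_R1_pow k (R 1 ^+ j * y) = 0.
Proof.
elim: k i j => [|k IH] i j /= bound.
  have [si|is_lt] := leqP s i.
    by rewrite -(subnK si) exprD -mulrA R1s_image mulr0.
  have tj : (t <= j)%N by lia.
  by rewrite -(subnK tj) exprD R1t mulr0 mul0r R0 mulr0.
by rewrite mulrBr !mulrA -exprS -exprSr !IH ?subrr //; lia.
Qed.

Lemma iter_R_eq0 k x : [pchar F] =i pred0 -> (s + t <= k.+1)%N ->
  iter k.+1 R x = 0.
Proof.
move=> /pcharf0P char0 bound.
have := @ad_R1_pow_vanish k 0 0 x bound.
rewrite expr0 !mul1r ad_R1_powE => /eqP; rewrite -scaler_nat scaler_eq0 char0.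
by rewrite eqn0Ngt fact_gt0 => /eqP.
Qed.

End NilpotentR1.
End RotaBaxterWeightZero.

Section NilpotentIdeal.
Variables (F : fieldType) (A : algType F) (N : pred A).

Lemma pow_ideal_zero_expr k a : pow_ideal_zero N k -> a \in N -> a ^+ k = 0.
Proof.
move=> Nk aN; have := Nk (nseq k a); rewrite big_nseq iter_mulr_1; apply.
  by rewrite size_nseq.
by rewrite all_nseq aN orbT.
Qed.

Lemma pow_ideal_zero_exprSr k a y :
  pow_ideal_zero N k.+1 -> a \in N -> y \in N -> a ^+ k * y = 0.
Proof.
move=> Nk aN yN; have := Nk (rcons (nseq k a) y).
rewrite -cats1 big_cat big_nseq iter_mulr_1 big_seq1; apply.
   by rewrite size_cat size_nseq addn1.
by rewrite all_cat all_nseq aN orbT /= yN.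
Qed.

Lemma RB0_image_nil (m : nat) (R : A -> A) : is_RB0 R -> 0 \in N ->
  (forall b, b \in N -> b ^+ m = 0) ->
  (forall a : A, exists c : F, exists n : A, n \in N /\ a = c%:A + n) ->
  forall x, R x \in N.
Proof.
move=> [linR RBR] N0 nilN span x; have [c [n [nN Rx]]] := span (R x).
have [c0|c0] := eqVneq c 0; first by rewrite Rx c0 scale0r add0r.
have : (R x - c%:A) ^+ m = 0 by rewrite Rx addrC addKr nilN.
move=> /(RB0_nilpotent_subC_trivial linR RBR c0) A0.
by rewrite -(mulr1 (R x)) A0 mulr0.
Qed.

End NilpotentIdeal.

Theorem theorem14 (F : fieldType) (A : algType F) (N : pred A) (m : nat)
  (R : A -> A) :
  [pchar F] =i pred0 ->
  is_ideal N -> nil_index N m -> unit_plus_N_decomp N ->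
  is_RB0 R ->
  (forall x : A, R x \in N) /\ rb_le A (2 * m - 1).
Proof.
move=> char0 [N0 _ _ _ _] [Nm _] [span _] RB.
have imN R' (RB' : is_RB0 R') : forall x, R' x \in N.
  exact: RB0_image_nil RB' N0 (fun b bN => pow_ideal_zero_expr Nm bN) span.
split; first exact: imN.
move=> R' RB' x; have R'N := imN R' RB'; case: RB' => linR RBR.
case: m Nm => [|m] Nm.
  have /= A0 := Nm [::] erefl isT; rewrite big_nil in A0.
  by rewrite /= -[x]mulr1 A0 mulr0.
have -> : (2 * m.+1 - 1 = (m + m).+1)%N by lia.
apply: (@iter_R_eq0 _ _ _ linR RBR m m.+1) => //.
- by move=> z; apply: pow_ideal_zero_exprSr Nm (R'N 1) (R'N z).
- exact: pow_ideal_zero_expr Nm (R'N 1).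
- by rewrite addnS.
Qed.
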